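(* Let $S=(s_{jl})\in\mathbb{C}^{4\times4}$ be Hermitian and $\varepsilon\in\{1,-1\}$. If $\max\{p(\theta_1,\theta_2)^2-q(\theta_1,\theta_2):\theta_1,\theta_2\in(-\pi,\pi]\}=0$, then $S$ is diagonal, $S=\operatorname{diag}(s_{11},s_{22},s_{33},s_{44})$, and $s_{11}+s_{22}-s_{33}-s_{44}=0$.
   Context: Let $S=(s_{jl})_{j,l=1}^4$ be a Hermitian $4\times4$ complex matrix (so $s_{jj}\in\mathbb{R}$ and $s_{lj}=\overline{s_{jl}}$) and $\varepsilon\in\{1,-1\}$. For $\theta_1,\theta_2\in\mathbb{R}$ define $$p=-\tfrac12\Big[s_{11}+s_{22}+s_{33}+s_{44}+2\varepsilon\operatorname{Re}(s_{12}\mathrm{e}^{i\theta_1})+2\varepsilon\operatorname{Re}(s_{34}\mathrm{e}^{i\theta_2})\Big],$$ $$\begin{aligned}q={}&-\big(|s_{13}|^2-s_{11}s_{33}+|s_{14}|^2-s_{11}s_{44}+|s_{23}|^2-s_{22}s_{33}+|s_{24}|^2-s_{22}s_{44}\big)\\&-2\varepsilon\Big[-(s_{33}+s_{44})\operatorname{Re}(s_{12}\mathrm{e}^{i\theta_1})+\operatorname{Re}\big((s_{13}\overline{s_{23}}+s_{14}\overline{s_{24}})\mathrm{e}^{i\theta_1}\big)\\&\qquad-(s_{11}+s_{22})\operatorname{Re}(s_{34}\mathrm{e}^{i\theta_2})+\operatorname{Re}\big((\overline{s_{13}}s_{14}+\overline{s_{23}}s_{24})\mathrm{e}^{i\theta_2}\big)\Big]\\&-2\operatorname{Re}\big((s_{14}\overline{s_{23}}-s_{12}s_{34})\mathrm{e}^{i(\theta_1+\theta_2)}\big)-2\operatorname{Re}\big((s_{13}\overline{s_{24}}-s_{12}\overline{s_{34}})\mathrm{e}^{i(\theta_1-\theta_2)}\big).\end{aligned}$$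 *)

From Stdlib Require Import Reals.
Open Scope R_scope.

Definition C : Type := (R * R)%type.
Definition Cre (z : C) : R := fst z.
Definition Cim (z : C) : R := snd z.
Definition C0 : C := (0, 0).
Definition Cadd (z w : C) : C := (fst z + fst w, snd z + snd w).
Definition Csub (z w : C) : C := (fst z - fst w, snd z - snd w).
Definition Cmul (z w : C) : C :=
  (fst z * fst w - snd z * snd w, fst z * snd w + snd z * fst w).
Definition Cconj (z : C) : C := (fst z, - snd z).
Definition Cnorm2 (z : C) : R := fst z * fst z + snd z * snd z.
Definition Cexpi (t : R) : C := (cos t, sin t).

(* A 4x4 complex matrix, entries S j l for j, l in {1,2,3,4}. *)
Definition Mat4 : Type := nat -> nat -> C.

Definition Hermitian4 (S : Mat4) : Prop :=
  forall j l, (1 <= j <= 4)%nat -> (1 <= l <= 4)%nat -> S l j = Cconj (S j l).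

Definition ReE (z : C) (t : R) : R := Cre (Cmul z (Cexpi t)).

Definition p_fun (S : Mat4) (eps t1 t2 : R) : R :=
  - / 2 * (Cre (S 1%nat 1%nat) + Cre (S 2%nat 2%nat) + Cre (S 3%nat 3%nat)
           + Cre (S 4%nat 4%nat)
           + 2 * eps * ReE (S 1%nat 2%nat) t1 + 2 * eps * ReE (S 3%nat 4%nat) t2).

Definition q_fun (S : Mat4) (eps t1 t2 : R) : R :=
  let s := fun j l : nat => S j l in
  let d := fun j : nat => Cre (S j j) in
  - (Cnorm2 (s 1 3)%nat - d 1%nat * d 3%nat + Cnorm2 (s 1 4)%nat - d 1%nat * d 4%nat
     + Cnorm2 (s 2 3)%nat - d 2%nat * d 3%nat + Cnorm2 (s 2 4)%nat - d 2%nat * d 4%nat)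
  - 2 * eps *
    ( - (d 3%nat + d 4%nat) * ReE (s 1 2)%nat t1
      + ReE (Cadd (Cmul (s 1 3)%nat (Cconj (s 2 3)%nat))
                  (Cmul (s 1 4)%nat (Cconj (s 2 4)%nat))) t1
      - (d 1%nat + d 2%nat) * ReE (s 3 4)%nat t2
      + ReE (Cadd (Cmul (Cconj (s 1 3)%nat) (s 1 4)%nat)
                  (Cmul (Cconj (s 2 3)%nat) (s 2 4)%nat)) t2)
  - 2 * ReE (Csub (Cmul (s 1 4)%nat (Cconj (s 2 3)%nat)) (Cmul (s 1 2)%nat (s 3 4)%nat))
            (t1 + t2)
  - 2 * ReE (Csub (Cmul (s 1 3)%nat (Cconj (s 2 4)%nat))
                  (Cmul (s 1 2)%nat (Cconj (s 3 4)%nat)))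
            (t1 - t2).

Definition f_fun (S : Mat4) (eps t1 t2 : R) : R :=
  p_fun S eps t1 t2 ^ 2 - q_fun S eps t1 t2.

Definition in_period (t : R) : Prop := - PI < t <= PI.

Definition max_is_zero (S : Mat4) (eps : R) : Prop :=
  (forall t1 t2, in_period t1 -> in_period t2 -> f_fun S eps t1 t2 <= 0) /\
  (exists t1 t2, in_period t1 /\ in_period t2 /\ f_fun S eps t1 t2 = 0).

(** For fixed angles, [p] and [q] are the coefficients of [x^2 + 2 p x + q], the
    characteristic polynomial of the Hermitian matrix [[alpha, beta], [beta^*, delta]], which
    is twice the compression of [S] to the plane spanned by two orthonormal vectors built from
    [e^{i theta_1}] and [e^{i theta_2}].  Hence [p^2 - q = ((alpha - delta)/2)^2 + |beta|^2 >= 0],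
    so a maximum equal to [0] forces [alpha = delta] and [beta = 0] for all angles.  Evaluating
    at the angles [0], [pi] and [pi/2] kills every off-diagonal entry of [S] and gives
    [s11 + s22 = s33 + s44]. *)

From Pilot Require Import Defs.
From Stdlib Require Import Reals Lra Lia.
Open Scope R_scope.

Definition alpha (S : Mat4) (eps t1 : R) : R :=
  Cre (S 1%nat 1%nat) + Cre (S 2%nat 2%nat) + 2 * eps * ReE (S 1%nat 2%nat) t1.

Definition delta (S : Mat4) (eps t2 : R) : R :=
  Cre (S 3%nat 3%nat) + Cre (S 4%nat 4%nat) + 2 * eps * ReE (S 3%nat 4%nat) t2.

Definition beta (S : Mat4) (eps t1 t2 : R) : Defs.C :=
  Cadd (Cadd (S 1%nat 3%nat) (Cmul (eps, 0) (Cmul (Cexpi t2) (S 1%nat 4%nat))))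
       (Cadd (Cmul (eps, 0) (Cmul (Cconj (Cexpi t1)) (S 2%nat 3%nat)))
             (Cmul (Cmul (Cexpi t2) (Cconj (Cexpi t1))) (S 2%nat 4%nat))).

Lemma f_fun_discriminant (S : Mat4) (eps t1 t2 : R) :
  eps ^ 2 = 1 ->
  f_fun S eps t1 t2 = ((alpha S eps t1 - delta S eps t2) / 2) ^ 2 + Cnorm2 (beta S eps t1 t2).
Proof.
  intros Heps.
  unfold f_fun, p_fun, q_fun, alpha, delta, beta, ReE, Cexpi.
  rewrite cos_plus, sin_plus, cos_minus, sin_minus.
  assert (H1 : sin t1 ^ 2 = 1 - cos t1 ^ 2) by (rewrite <- (sin2_cos2 t1); unfold Rsqr; ring).
  assert (H2 : sin t2 ^ 2 = 1 - cos t2 ^ 2) by (rewrite <- (sin2_cos2 t2); unfold Rsqr; ring).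
  destruct (S 1%nat 1%nat) as [x11 y11], (S 2%nat 2%nat) as [x22 y22],
    (S 3%nat 3%nat) as [x33 y33], (S 4%nat 4%nat) as [x44 y44],
    (S 1%nat 2%nat) as [x12 y12], (S 1%nat 3%nat) as [x13 y13],
    (S 1%nat 4%nat) as [x14 y14], (S 2%nat 3%nat) as [x23 y23],
    (S 2%nat 4%nat) as [x24 y24], (S 3%nat 4%nat) as [x34 y34].
  unfold Cre, Cmul, Cadd, Csub, Cconj, Cnorm2; cbn [fst snd]; cbv zeta; unfold Rdiv.
  (* Fully expanded, the two sides differ only modulo [eps^2 = 1] and [sin^2 + cos^2 = 1]. *)
  apply Rminus_diag_uniq.
  ring_simplify.
  rewrite H1, H2, Heps.
  field.
Qed.

Lemma sqr_add_Cnorm2_eq0 (a : R) (z : Defs.C) : a ^ 2 + Cnorm2 z <= 0 -> a = 0 /\ z = C0.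
Proof.
  destruct z as [x y]; unfold Cnorm2, C0; cbn [fst snd]; intros H.
  assert (a = 0 /\ x = 0 /\ y = 0) as (-> & -> & ->) by (repeat split; nra).
  auto.
Qed.

Lemma max_is_zero_compression (S : Mat4) (eps : R) :
  eps ^ 2 = 1 -> max_is_zero S eps ->
  forall t1 t2, in_period t1 -> in_period t2 ->
  alpha S eps t1 = delta S eps t2 /\ beta S eps t1 t2 = C0.
Proof.
  intros Heps [Hle _] t1 t2 H1 H2.
  specialize (Hle t1 t2 H1 H2); rewrite f_fun_discriminant in Hle by exact Heps.
  destruct (sqr_add_Cnorm2_eq0 _ _ Hle) as [Hgap ->]; split; [lra | reflexivity].
Qed.

Lemma in_period_0 : in_period 0.
Proof. unfold in_period; pose proof PI_RGT_0; lra. Qed.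

Lemma in_period_PI : in_period PI.
Proof. unfold in_period; pose proof PI_RGT_0; lra. Qed.

Lemma in_period_PI2 : in_period (PI / 2).
Proof. unfold in_period; pose proof PI_RGT_0; lra. Qed.

Lemma Cexpi_0 : Cexpi 0 = (1, 0).
Proof. unfold Cexpi; rewrite cos_0, sin_0; reflexivity. Qed.

Lemma Cexpi_PI : Cexpi PI = (-1, 0).
Proof. unfold Cexpi; rewrite cos_PI, sin_PI; reflexivity. Qed.

Lemma Cexpi_PI2 : Cexpi (PI / 2) = (0, 1).
Proof. unfold Cexpi; rewrite cos_PI2, sin_PI2; reflexivity. Qed.

Lemma C_eq0 (z : Defs.C) : fst z = 0 -> snd z = 0 -> z = C0.
Proof. destruct z; cbn; intros -> ->; reflexivity. Qed.

Section BlockEntries.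

Variables (S : Mat4) (eps : R).
Hypothesis eps_sign : eps = 1 \/ eps = -1.

(* [beta] at [theta_i] in {0, pi} is a Hadamard-type signed sum of [s13, s14, s23, s24]. *)
Lemma beta_eq0_offblock :
  (forall t1 t2, in_period t1 -> in_period t2 -> beta S eps t1 t2 = C0) ->
  S 1%nat 3%nat = C0 /\ S 1%nat 4%nat = C0 /\ S 2%nat 3%nat = C0 /\ S 2%nat 4%nat = C0.
Proof.
  intros Hbeta.
  pose proof (Hbeta 0 0 in_period_0 in_period_0) as B1.
  pose proof (Hbeta PI 0 in_period_PI in_period_0) as B2.
  pose proof (Hbeta 0 PI in_period_0 in_period_PI) as B3.
  pose proof (Hbeta PI PI in_period_PI in_period_PI) as B4.
  unfold beta in B1, B2, B3, B4; rewrite ?Cexpi_0, ?Cexpi_PI in *.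
  destruct (S 1%nat 3%nat) as [x13 y13], (S 1%nat 4%nat) as [x14 y14],
    (S 2%nat 3%nat) as [x23 y23], (S 2%nat 4%nat) as [x24 y24].
  unfold Cmul, Cadd, Cconj, C0 in B1, B2, B3, B4; cbn [fst snd] in B1, B2, B3, B4.
  injection B1; injection B2; injection B3; injection B4; intros.
  destruct eps_sign as [-> | ->]; repeat split; apply C_eq0; cbn; lra.
Qed.

Lemma alpha_eq_delta_block :
  (forall t1 t2, in_period t1 -> in_period t2 -> alpha S eps t1 = delta S eps t2) ->
  S 1%nat 2%nat = C0 /\ S 3%nat 4%nat = C0 /\
  Cre (S 1%nat 1%nat) + Cre (S 2%nat 2%nat) - Cre (S 3%nat 3%nat) - Cre (S 4%nat 4%nat) = 0.
Proof.
  intros Hbal.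
  pose proof (Hbal 0 0 in_period_0 in_period_0) as A1.
  pose proof (Hbal PI 0 in_period_PI in_period_0) as A2.
  pose proof (Hbal 0 PI in_period_0 in_period_PI) as A3.
  pose proof (Hbal (PI / 2) 0 in_period_PI2 in_period_0) as A4.
  pose proof (Hbal 0 (PI / 2) in_period_0 in_period_PI2) as A5.
  unfold alpha, delta, ReE in A1, A2, A3, A4, A5.
  rewrite ?Cexpi_0, ?Cexpi_PI, ?Cexpi_PI2 in *.
  destruct (S 1%nat 2%nat) as [x12 y12], (S 3%nat 4%nat) as [x34 y34].
  unfold Cmul, Cre in *; cbn [fst snd] in *.
  destruct eps_sign as [-> | ->]; repeat split; try apply C_eq0; cbn; lra.
Qed.

End BlockEntries.

Lemma hermitian4_diagonal (S : Mat4) :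
  Hermitian4 S ->
  S 1%nat 2%nat = C0 -> S 1%nat 3%nat = C0 -> S 1%nat 4%nat = C0 ->
  S 2%nat 3%nat = C0 -> S 2%nat 4%nat = C0 -> S 3%nat 4%nat = C0 ->
  forall j l, (1 <= j <= 4)%nat -> (1 <= l <= 4)%nat -> j <> l -> S j l = C0.
Proof.
  intros HS E12 E13 E14 E23 E24 E34.
  assert (Hupper : forall j l, (1 <= j <= 4)%nat -> (1 <= l <= 4)%nat -> (j < l)%nat ->
            S j l = C0).
  { intros j l Hj Hl Hjl.
    destruct j as [|[|[|[|[|j]]]]]; try lia; destruct l as [|[|[|[|[|l]]]]]; try lia; auto. }
  intros j l Hj Hl Hjl.
  destruct (Nat.lt_gt_cases j l) as [[Hlt | Hgt] _]; [exact Hjl | auto |].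
  rewrite HS, Hupper by (auto || lia).
  apply C_eq0; cbn; lra.
Qed.

Theorem mainTheorem12 (S : Mat4) (eps : R) :
  Hermitian4 S ->
  (eps = 1 \/ eps = -1) ->
  max_is_zero S eps ->
  (forall j l, (1 <= j <= 4)%nat -> (1 <= l <= 4)%nat -> j <> l -> S j l = C0) /\
  Cre (S 1%nat 1%nat) + Cre (S 2%nat 2%nat) - Cre (S 3%nat 3%nat) - Cre (S 4%nat 4%nat) = 0.
Proof.
  intros HS Hsign Hmax.
  assert (Heps : eps ^ 2 = 1) by (destruct Hsign as [-> | ->]; ring).
  pose proof (max_is_zero_compression S eps Heps Hmax) as Hcomp.
  destruct (beta_eq0_offblock S eps Hsign) as (E13 & E14 & E23 & E24).
  { intros t1 t2 H1 H2; exact (proj2 (Hcomp t1 t2 H1 H2)). }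
  destruct (alpha_eq_delta_block S eps Hsign) as (E12 & E34 & Htrace).
  { intros t1 t2 H1 H2; exact (proj1 (Hcomp t1 t2 H1 H2)). }
  split; [exact (hermitian4_diagonal S HS E12 E13 E14 E23 E24 E34) | exact Htrace].
Qed.
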